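(* For every unweighted congestion game $\mathcal{G}$ with affine latency functions, $\mathrm{Apx}^1_\emptyset(\mathcal{G})\le 2+\sqrt{5}$.
   Context: A weighted congestion game consists of a finite set $[n]=\{1,\dots,n\}$ of players, a finite set $E$ of resources, for each player $i$ a weight $w_i>0$ and a nonempty finite strategy set $\Sigma_i\subseteq 2^E$, and for each resource $e$ a latency function $\ell_e:\mathbb{R}_{\ge 0}\to\mathbb{R}_{\ge 0}$. It is unweighted if $w_i=1$ for all $i$. Affine latency functions means $\ell_e(x)=\alpha_e x+\beta_e$ with $\alpha_e,\beta_e\ge 0$. For a (possibly partial) profile in which each player in some subset $P\subseteq[n]$ has chosen a strategy $s_i$, the congestion of $e$ is $L_e=\sum_{i\in P:\,e\in s_i}w_i$ and the cost of a player $i\in P$ is $\sum_{e\in s_i}\ell_e(L_e)$. For a full profile $S$, $\mathrm{SUM}(S)=\sum_{i\in[n]}c_i(S)$ and $S^*$ minimizes $\mathrm{SUM}$. A one-round walk from the empty strategy profile: starting with no player having chosen a strategy, the players arrive one at a time in some order, and each arriving player selects a best response, i.e., a strategy in her strategy set minimizing her cost given the strategies already chosen by the previously arrived players (later players not yet present); the outcome is the full profile after all $n$ players have chosen. $\mathrm{Apx}^1_\emptyset(\mathcal{G})$ is the maximum, over all orderings of the players and all choices among best responses, of $\mathrm{SUM}(\text{outcome})/\mathrm{SUM}(S^* )$. *)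

From HB Require Import structures.
From mathcomp Require Import all_boot all_order all_algebra all_fingroup.
Set Implicit Arguments. Unset Strict Implicit. Unset Printing Implicit Defensive.
Import Order.TTheory GRing.Theory Num.Theory.
Local Open Scope ring_scope.

Section CG.
Variables (R : rcfType) (n : nat) (E : finType).
Variables (alpha beta : E -> R).

Definition profile := 'I_n -> {set E}.

(* congestion of e when only the players in P are present (unweighted: w_i = 1) *)
Definition load (S : profile) (P : {set 'I_n}) (e : E) : nat :=
  #|[set j in P | e \in S j]|.

Definition lat (e : E) (x : nat) : R := alpha e * x%:R + beta e.

Definition pcost (S : profile) (P : {set 'I_n}) (i : 'I_n) : R :=
  \sum_(e in S i) lat e (load S P e).

Definition SUM (S : profile) : R := \sum_(i < n) pcost S setT i.

Definition upd (S : profile) (i : 'I_n) (s : {set E}) : profile :=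
  fun j => if j == i then s else S j.

Definition feasible (Sigma : 'I_n -> {set {set E}}) (S : profile) : Prop :=
  forall i, S i \in Sigma i.

Definition prev (sigma : {perm 'I_n}) (k : 'I_n) : {set 'I_n} :=
  [set sigma j | j in [set j : 'I_n | (j < k)%N]].

(* S is an outcome of a one-round walk from the empty profile with arrival
   order sigma (sigma k = the k-th arriving player): each arriving player
   picks a best response against the previously arrived players. *)
Definition one_round_outcome (Sigma : 'I_n -> {set {set E}})
    (sigma : {perm 'I_n}) (S : profile) : Prop :=
  feasible Sigma S /\
  forall k : 'I_n, forall s, s \in Sigma (sigma k) ->
    pcost S (sigma k |: prev sigma k) (sigma k)
      <= pcost (upd S (sigma k) s) (sigma k |: prev sigma k) (sigma k).

Definition optimal (Sigma : 'I_n -> {set {set E}}) (S : profile) : Prop :=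
  feasible Sigma S /\ forall S', feasible Sigma S' -> SUM S <= SUM S'.
End CG.

From Pilot Require Import Defs.
From HB Require Import structures.
From mathcomp Require Import all_boot all_order all_algebra all_fingroup.
From mathcomp Require Import ring lra.
Import Order.TTheory GRing.Theory Num.Theory.
Set Implicit Arguments. Unset Strict Implicit. Unset Printing Implicit Defensive.
Local Open Scope ring_scope.

(* Let x_e and o_e be the loads of resource e in the outcome S and in the
   optimum S*.  The doubled Rosenthal potential
       Phi(S) = sum_e alpha_e x_e (x_e + 1) + 2 beta_e x_e
   grows by exactly twice a player's cost when she is added, so Phi(S) is
   twice the sum A of the players' costs at their arrival times.  By the best
   response property each arrival cost is at most the cost of deviating to the
   optimal strategy, whence A <= B := sum_e o_e (alpha_e (x_e + 1) + beta_e).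
   Finally, with s = sqrt 5, a per-resource quadratic inequality gives
       2 x_e l_e(x_e) <= 2 (2 + s) o_e l_e(o_e) + (1 + s) (Phi_e - 2 B_e),
   and summing over resources with Phi = 2 A <= 2 B yields the theorem. *)

Lemma sqrt5_facts (R : rcfType) :
  Num.sqrt (5 : R) * Num.sqrt 5 = 5 /\ 2 < Num.sqrt (5 : R).
Proof.
have h5 : Num.sqrt (5 : R) ^+ 2 = 5 by rewrite sqr_sqrtr.
rewrite expr2 in h5; split=> //.
have h0 : 0 <= Num.sqrt (5 : R) := sqrtr_ge0 _.
nra.
Qed.

(* The quadratic form multiplying alpha_e in the per-resource inequality. *)
Definition quad_gap (R : pzRingType) (s X O : R) : R :=
  (s - 1) * X ^+ 2 - 2 * (1 + s) * O * X + 2 * (2 + s) * O ^+ 2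
  + (1 + s) * X - 2 * (1 + s) * O.

(* quad_gap is nonnegative at integer points when s = sqrt 5.  For o >= 2 this
   follows from completing the square in x (the discriminant term vanishes
   because s^2 = 5); the cases o = 0 and o = 1 factor directly. *)
Lemma quad_gap_ge0 (R : realFieldType) (s : R) (x o : nat) :
  s * s = 5 -> 2 < s -> 0 <= quad_gap s x%:R o%:R.
Proof.
move=> h5 h2; rewrite /quad_gap.
have hX : 0 <= (x%:R : R) by rewrite ler0n.
case: o => [|[|o]].
- rewrite mulr0n; nra.
- rewrite mulr1n.
  have -> : (s - 1) * x%:R ^+ 2 - 2 * (1 + s) * 1 * x%:R + 2 * (2 + s) * 1 ^+ 2
            + (1 + s) * x%:R - 2 * (1 + s) * 1
          = (x%:R - 1) * ((s - 1) * x%:R - 2) :> R by ring.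
  case: x hX => [|[|x]] hX.
  + rewrite mulr0n; nra.
  + rewrite mulr1n; nra.
  + have hX2 : 2 <= (x.+2%:R : R) by rewrite ler_nat.
    nra.
- have hO : 2 <= (o.+2%:R : R) by rewrite ler_nat.
  set O := (o.+2%:R : R); set X := (x%:R : R).
  have hs1 : 0 < s - 1 by lra.
  set Q := _ - 2 * (1 + s) * O.
  suff : 0 <= 4 * (s - 1) * Q by rewrite pmulr_rge0 //; lra.
  have -> : 4 * (s - 1) * Q
          = (2 * (s + 1) * O - 2 * (s - 1) * X - (s + 1)) ^+ 2
            + (8 * s - 8) * O - 6 - 2 * s + (s * s - 5) * (4 * O ^+ 2 - 4 * O - 1)
    by rewrite /Q; ring.
  rewrite h5 subrr mul0r addr0.
  have := sqr_ge0 (2 * (s + 1) * O - 2 * (s - 1) * X - (s + 1)).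
  nra.
Qed.

Lemma resource_bound (R : realFieldType) (s a b : R) (x o : nat) :
  s * s = 5 -> 2 < s -> 0 <= a -> 0 <= b ->
  2 * (x%:R * (a * x%:R + b)) <=
    2 * (2 + s) * (o%:R * (a * o%:R + b))
    + (1 + s) * ((a * (x%:R * (x%:R + 1)) + 2 * b * x%:R)
                 - 2 * (o%:R * (a * (x%:R + 1) + b))).
Proof.
move=> h5 h2 ha hb; rewrite -subr_ge0.
set X := (x%:R : R); set O := (o%:R : R).
have -> : 2 * (2 + s) * (O * (a * O + b))
          + (1 + s) * ((a * (X * (X + 1)) + 2 * b * X) - 2 * (O * (a * (X + 1) + b)))
          - 2 * (X * (a * X + b))
        = a * quad_gap s X O + b * (2 * (O + s * X)) by rewrite /quad_gap; ring.
have hX : 0 <= X by rewrite ler0n.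
have hO : 0 <= O by rewrite ler0n.
apply: addr_ge0; apply: mulr_ge0 => //; first exact: quad_gap_ge0.
nra.
Qed.

Section Potential.
Variables (R : rcfType) (n : nat) (E : finType) (alpha beta : E -> R).

Lemma sum_over_strategies (T : profile n E) (g : E -> R) :
  \sum_(i < n) \sum_(e in T i) g e = \sum_e (load T setT e)%:R * g e.
Proof.
under eq_bigr do rewrite big_mkcond.
rewrite exchange_big; apply: eq_bigr => e _.
rewrite -big_mkcond /= mulr_natl -sumr_const.
by apply: eq_bigl => j; rewrite !inE.
Qed.

Lemma SUM_by_resources (T : profile n E) :
  SUM alpha beta T =
  \sum_e (load T setT e)%:R * (alpha e * (load T setT e)%:R + beta e).
Proof. exact: sum_over_strategies. Qed.

Lemma load_setU1 (T : profile n E) (Q : {set 'I_n}) i e : i \notin Q ->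
  load T (i |: Q) e = (load T Q e + (e \in T i))%N.
Proof.
move=> iQ; rewrite /load; case: (boolP (e \in T i)) => eT.
- have -> : [set j in i |: Q | e \in T j] = i |: [set j in Q | e \in T j].
    by apply/setP => j; rewrite !inE; case: (eqVneq j i) => [->|].
  by rewrite cardsU1 inE (negbTE iQ) addnC.
- have -> : [set j in i |: Q | e \in T j] = [set j in Q | e \in T j].
    apply/setP => j; rewrite !inE; case: (eqVneq j i) => [->|] //=.
    by rewrite (negbTE eT) andbF.
  by rewrite addn0.
Qed.

Lemma load_upd_le (T : profile n E) i s P e :
  (load (upd T i s) P e <= (load T setT e).+1)%N.
Proof.
rewrite /load; apply: leq_trans
  (subset_leq_card (_ : _ \subset i |: [set j in setT | e \in T j])) _.
  apply/subsetP => j; rewrite !inE /upd; case: eqP => //= _.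
  by case/andP.
by rewrite cardsU1 -add1n leq_add2r leq_b1.
Qed.

(* Twice Rosenthal's potential of the partial profile of the players in Q. *)
Definition potential (T : profile n E) (Q : {set 'I_n}) : R :=
  \sum_e (alpha e * ((load T Q e)%:R * ((load T Q e)%:R + 1))
          + 2 * beta e * (load T Q e)%:R).

Lemma potential_set0 (T : profile n E) : potential T set0 = 0.
Proof.
rewrite /potential big1 // => e _.
have -> : load T set0 e = 0%N.
  by apply/eqP; rewrite cards_eq0; apply/eqP/setP => j; rewrite !inE.
by rewrite mul0r !mulr0 addr0.
Qed.

Lemma potential_setU1 (T : profile n E) (Q : {set 'I_n}) i : i \notin Q ->
  potential T (i |: Q) = potential T Q + 2 * pcost alpha beta T (i |: Q) i.
Proof.
move=> iQ; rewrite /potential /pcost [X in _ + 2 * X]big_mkcond mulr_sumr.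
rewrite -big_split /=; apply: eq_bigr => e _; rewrite !load_setU1 //.
case: (e \in T i) => /=; first by rewrite /lat !natrD; ring.
by rewrite addn0 mulr0 addr0.
Qed.

(* The players among the first m arrivals in the order sigma; for k : 'I_n,
   [arrived sigma k] is [Defs.prev sigma k]. *)
Definition arrived (sigma : {perm 'I_n}) (m : nat) : {set 'I_n} :=
  [set sigma j | j in [set j : 'I_n | (j < m)%N]].

Lemma arrived0 (sigma : {perm 'I_n}) : arrived sigma 0 = set0.
Proof. by apply/setP => i; rewrite inE; apply/imsetP => -[j]; rewrite inE. Qed.

Lemma arrived_all (sigma : {perm 'I_n}) : arrived sigma n = setT.
Proof.
apply/setP => i; rewrite inE; apply/imsetP; exists (sigma^-1 i)%g.
  by rewrite inE.
by rewrite permKV.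
Qed.

Lemma arrivedS (sigma : {perm 'I_n}) (k : 'I_n) :
  arrived sigma k.+1 = sigma k |: arrived sigma k /\
  sigma k \notin arrived sigma k.
Proof.
split.
- apply/setP => i; rewrite in_setU1; apply/imsetP/orP.
  + move=> [j]; rewrite inE ltnS leq_eqVlt => /orP [/eqP hj|hj] ->.
      by left; apply/eqP; congr (sigma _); apply/val_inj.
    by right; apply/imsetP; exists j; rewrite ?inE.
  + case=> [/eqP ->|/imsetP [j]]; first by exists k; rewrite ?inE.
    by rewrite inE => hj ->; exists j; rewrite // inE ltnW.
- apply/imsetP => -[j]; rewrite inE => hj /perm_inj hjk.
  by move: hj; rewrite -hjk ltnn.
Qed.

Definition arrival_cost (T : profile n E) (sigma : {perm 'I_n}) (k : 'I_n) : R :=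
  pcost alpha beta T (sigma k |: Defs.prev sigma k) (sigma k).

Lemma potential_arrived (T : profile n E) (sigma : {perm 'I_n}) m : (m <= n)%N ->
  potential T (arrived sigma m) =
  2 * \sum_(k < n | (k < m)%N) arrival_cost T sigma k.
Proof.
elim: m => [|m IH] hm; first by rewrite arrived0 potential_set0 big_pred0 ?mulr0.
pose k := Ordinal hm; have [-> hnew] := arrivedS sigma k.
rewrite (potential_setU1 _ hnew) (IH (ltnW hm)).
rewrite [in RHS](bigD1 k) ?ltnSn // mulrDr addrC; congr (_ + _).
congr (2 * _); apply: eq_bigl => j.
by rewrite -val_eqE /= ltnS andbC; case: ltngtP.
Qed.

Lemma potential_all (T : profile n E) (sigma : {perm 'I_n}) :
  potential T setT = 2 * \sum_(k < n) arrival_cost T sigma k.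
Proof.
rewrite -(arrived_all sigma) potential_arrived //.
by congr (2 * _); apply: eq_bigl => k; rewrite ltn_ord.
Qed.

(* In a one-round walk, the total arrival cost is at most what the players
   would pay by deviating at arrival to the strategies of any feasible
   profile T' (charged at the final loads plus one); this needs nonnegative
   slopes, so that latencies are monotone. *)
Lemma arrival_costs_le (Sigma : 'I_n -> {set {set E}}) (sigma : {perm 'I_n})
    (T T' : profile n E) : (forall e, 0 <= alpha e) ->
  one_round_outcome alpha beta Sigma sigma T -> feasible Sigma T' ->
  \sum_(k < n) arrival_cost T sigma k <=
  \sum_e (load T' setT e)%:R * (alpha e * ((load T setT e)%:R + 1) + beta e).
Proof.
move=> halpha [_ hBR] hT'.
pose dev i := \sum_(e in T' i) (alpha e * ((load T setT e)%:R + 1) + beta e).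
apply: (@le_trans _ _ (\sum_(k < n) dev (sigma k))).
  apply: ler_sum => k _; apply: le_trans (hBR k _ (hT' (sigma k))) _.
  rewrite /pcost /dev /upd eqxx; apply: ler_sum => e _; rewrite /lat.
  by rewrite lerD2r ler_wpM2l // natr1 ler_nat load_upd_le.
by rewrite -(reindex_inj (@perm_inj _ sigma) (P := predT) (F := dev)) sum_over_strategies.
Qed.

End Potential.

Theorem mainTheorem7 (R : rcfType) (n : nat) (E : finType)
  (Sigma : 'I_n -> {set {set E}}) (alpha beta : E -> R)
  (hSigma : forall i, Sigma i != set0)
  (halpha : forall e, 0 <= alpha e) (hbeta : forall e, 0 <= beta e)
  (sigma : {perm 'I_n}) (S Sopt : profile n E)
  (hS : one_round_outcome alpha beta Sigma sigma S)
  (hopt : optimal alpha beta Sigma Sopt) :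
  SUM alpha beta S <= (2 + Num.sqrt 5) * SUM alpha beta Sopt.
Proof.
have [h5 h2] := sqrt5_facts R; set s := Num.sqrt (5 : R) in h5 h2 *.
have hA := arrival_costs_le halpha hS hopt.1.
set A := \sum_(k < n) _ in hA; set B := \sum_e _ in hA.
have hPhi : potential alpha beta S setT = 2 * A := potential_all _ _ _ _.
(* Summing the per-resource bound: 2 SUM S <= 2 (2+s) SUM S* + (1+s) (Phi - 2B). *)
have hsum := @ler_sum _ _ (index_enum E) (fun e => e \in E) _ _ (fun e _ =>
  resource_bound (load S setT e) (load Sopt setT e) h5 h2 (halpha e) (hbeta e)).
rewrite -mulr_sumr -SUM_by_resources big_split /= -!mulr_sumr sumrB -mulr_sumr
  -SUM_by_resources in hsum.
rewrite -/B -/(potential alpha beta S setT) hPhi in hsum.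
have hneg : (1 + s) * (2 * A - 2 * B) <= 0 by rewrite mulr_ge0_le0 //; lra.
lra.
Qed.
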